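(* Let $\hat g_{\ell,1},\hat g_{\ell,2}>0$ with $\hat g_{\ell,1}>\hat g_{\ell,2}$, let $\rho_\ell>0$, and let $R_{\rm sum}$ be a positive integer. Let $x^\star_\ell$ be the minimizer over $x\ge0$ of $\hat p_\ell(x)=\frac{(k_\ell+x)\hat g_{\ell,2}}{x+1}\exp\!\big(-\frac{x}{(x+1)^2}\beta_\ell\big)$, where $k_\ell=\hat g_{\ell,1}/\hat g_{\ell,2}$ and $\beta_\ell=R_{\rm sum}\rho_\ell$ (with $x^\star_\ell=\infty$ allowed). Define the beam allocation $$(r^\star_{\ell,1},r^\star_{\ell,2})=\begin{cases}\Big(\Big\lfloor\dfrac{R_{\rm sum}}{x^\star_\ell+1}\Big\rfloor,\Big\lfloor\dfrac{x^\star_\ell R_{\rm sum}}{x^\star_\ell+1}\Big\rfloor\Big), & \text{if } \dfrac{R_{\rm sum}}{x^\star_\ell+1}>1,\\[2mm] (1,R_{\rm sum}-1), & \text{if } \dfrac{R_{\rm sum}}{x^\star_\ell+1}\le 1.\end{cases}$$ Then $r^\star_{\ell,1}\le r^\star_{\ell,2}$.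
   Context: Setting: beam alignment with two beam candidates with prior probabilities $\hat g_{\ell,1},\hat g_{\ell,2}$ of being the optimal beam, repeated $r_{\ell,1},r_{\ell,2}$ times with $r_{\ell,1}+r_{\ell,2}\le R_{\rm sum}$, chosen to minimize the miss-determination bound $\frac{r_{\ell,1}\hat g_{\ell,1}+r_{\ell,2}\hat g_{\ell,2}}{R_{\rm sum}}\exp(-\frac{r_{\ell,1}r_{\ell,2}}{R_{\rm sum}}\rho_\ell)$; the displayed rounded allocation derived from the relaxed optimal ratio $x^\star_\ell=r_{\ell,2}/r_{\ell,1}$ is the paper's solution of this problem. It is known (Theorem 1 of the paper) that $x^\star_\ell>1$ when $\hat g_{\ell,1}>\hat g_{\ell,2}$. *)

From mathcomp Require Import all_boot all_order all_algebra.
From mathcomp Require Import all_classical all_reals all_analysis.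
Set Implicit Arguments. Unset Strict Implicit. Unset Printing Implicit Defensive.
Import Order.TTheory GRing.Theory Num.Theory.
Import numFieldNormedType.Exports.
Local Open Scope classical_set_scope.
Local Open Scope ring_scope.

Definition phat (R : realType) (g1 g2 beta : R) (x : R) : R :=
  ((g1 / g2) + x) * g2 / (x + 1) * expR (- (x / (x + 1) ^+ 2 * beta)).

Definition phat_ext (R : realType) (g1 g2 beta : R) (y : \bar R) : R :=
  match y with
  | EFin x => phat g1 g2 beta x
  | +oo%E => lim (phat g1 g2 beta x @[x --> +oo%R])
  | -oo%E => 0
  end.

Definition is_minimizer (R : realType) (g1 g2 beta : R) (xs : \bar R) : Prop :=
  (0 <= xs)%E /\
  forall y : \bar R, (0 <= y)%E -> phat_ext g1 g2 beta xs <= phat_ext g1 g2 beta y.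

(* the rounded allocation (r_1^star, r_2^star); for xs = +oo, Rsum/(xs+1) = 0 <= 1 *)
Definition alloc (R : realType) (Rsum : nat) (xs : \bar R) : int * int :=
  match xs with
  | EFin x =>
      if 1 < Rsum%:R / (x + 1)
      then (Num.floor (Rsum%:R / (x + 1)), Num.floor (x * Rsum%:R / (x + 1)))
      else (1%:Z, Rsum%:Z - 1)
  | _ => (1%:Z, Rsum%:Z - 1)
  end.

From mathcomp Require Import all_boot all_order all_algebra.
From mathcomp Require Import all_classical all_reals all_analysis.
From mathcomp Require Import ring lra.
Import Order.TTheory GRing.Theory Num.Theory.
Local Open Scope ring_scope.

(* Writing phat x = (g1 + x g2) / (x + 1) * expR (- x / (x + 1)^2 * beta), the
   exponent is invariant under x |-> 1/x while the prefactor becomes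
   (g1 x + g2) / (x + 1), smaller for 0 < x < 1 since g1 > g2; and x = 0 is
   beaten by x = 1.  So a minimizer satisfies x >= 1, whence
   R/(x+1) <= x R/(x+1) and the floors are ordered too. *)

Lemma phatE (R : realType) (g1 g2 beta x : R) : g2 != 0 ->
  phat g1 g2 beta x =
  (g1 + x * g2) / (x + 1) * expR (- (x / (x + 1) ^+ 2 * beta)).
Proof. by move=> g2n0; rewrite /phat mulrDl divfK. Qed.

(* Also holds in the junk cases x = 0 and x = -1. *)
Lemma exp_weightV (R : fieldType) (x : R) :
  x^-1 / (x^-1 + 1) ^+ 2 = x / (x + 1) ^+ 2.
Proof.
have [-> | xn0] := eqVneq x 0; first by rewrite invr0 !mul0r.
have [/eqP | x1n0] := eqVneq (x + 1) 0; last by field; rewrite x1n0 xn0.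
rewrite addr_eq0 => /eqP ->.
by rewrite invrN invr1 addNr expr0n /= invr0 !mulr0.
Qed.

Section PhatComparisons.
Variables (R : realType) (g1 g2 beta : R).
Hypotheses (g2_gt0 : 0 < g2) (g2_lt_g1 : g2 < g1).

Let g2_neq0 : g2 != 0. Proof. by rewrite gt_eqF. Qed.

Lemma phatV_lt (x : R) : 0 < x < 1 -> phat g1 g2 beta x^-1 < phat g1 g2 beta x.
Proof.
case/andP=> x_gt0 x_lt1; have x1_gt0 : 0 < x + 1 by lra.
rewrite !phatE // exp_weightV ltr_pM2r ?expR_gt0 //.
have -> : (g1 + x^-1 * g2) / (x^-1 + 1) = (g1 * x + g2) / (x + 1).
  by field; rewrite !gt_eqF.
rewrite ltr_pM2r ?invr_gt0 // -subr_gt0.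
have -> : g1 + x * g2 - (g1 * x + g2) = (g1 - g2) * (1 - x) by ring.
by rewrite mulr_gt0 // subr_gt0.
Qed.

Lemma phat1_lt_phat0 : 0 <= beta -> phat g1 g2 beta 1 < phat g1 g2 beta 0.
Proof.
move=> beta_ge0; have g1_gt0 : 0 < g1 := lt_trans g2_gt0 g2_lt_g1.
rewrite !phatE // !mul0r oppr0 expR0 !mulr1 !add0r addr0 invr1 mulr1 !mul1r.
have mean_lt_g1 : (g1 + g2) / (1 + 1) < g1.
  by rewrite ltr_pdivrMr ?addr_gt0 // mulrDr mulr1 ltrD2l.
have damping_le1 : expR (- ((1 + 1) ^- 2 * beta)) <= 1.
  by rewrite expR_le1 oppr_le0 mulr_ge0 ?invr_ge0 ?exprn_ge0 ?addr_ge0.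
apply: le_lt_trans mean_lt_g1.
by rewrite ger_pMr // divr_gt0 ?addr_gt0.
Qed.

End PhatComparisons.

Lemma minimizer_ge1 {R : realType} {g1 g2 beta : R} {xs : \bar R} :
  0 < g2 -> g2 < g1 -> 0 <= beta -> is_minimizer g1 g2 beta xs -> (1 <= xs)%E.
Proof.
move=> g2_gt0 g2_lt_g1 beta_ge0; case: xs => [x | | ] [//= xs_ge0 xs_min].
  rewrite lee_fin leNgt; apply/negP => x_lt1.
  have [x0 | x_neq0] := eqVneq x 0.
    have := xs_min 1%:E; rewrite lee_fin ler01 x0 => /(_ isT) /=.
    by rewrite leNgt phat1_lt_phat0.
  have x_gt0 : 0 < x by rewrite lt0r x_neq0 -lee_fin.
  have := xs_min x^-1%:E; rewrite lee_fin invr_ge0 ltW // => /(_ isT) /=.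
  by rewrite leNgt phatV_lt ?x_gt0.
by rewrite leey.
Qed.

Lemma alloc_le {R : realType} {Rsum : nat} {xs : \bar R} :
  (2 <= Rsum)%N -> (1 <= xs)%E -> (alloc Rsum xs).1 <= (alloc Rsum xs).2.
Proof.
move=> Rsum_ge2; have default_le : 1%:Z <= Rsum%:Z - 1.
  by rewrite lerBrDr -natz lez_nat.
case: xs => [x | | ] //= x_ge1; case: ifP => // _ /=.
rewrite lee_fin in x_ge1.
apply: le_floor; rewrite ler_pM2r ?invr_gt0; last lra.
by rewrite ler_peMl.
Qed.

Theorem corollary1 (R : realType) (g1 g2 rho : R) (Rsum : nat) (xs : \bar R) :
  0 < g1 -> 0 < g2 -> g2 < g1 -> 0 < rho -> (2 <= Rsum)%N ->
  is_minimizer g1 g2 (Rsum%:R * rho) xs ->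
  (alloc Rsum xs).1 <= (alloc Rsum xs).2.
Proof.
move=> _ g2_gt0 g2_lt_g1 rho_gt0 Rsum_ge2 xs_min.
have beta_ge0 : 0 <= Rsum%:R * rho by rewrite mulr_ge0 // ltW.
exact: alloc_le Rsum_ge2 (minimizer_ge1 g2_gt0 g2_lt_g1 beta_ge0 xs_min).
Qed.
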